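(* Let $\{W_n\}_{n\ge0}$ be an Appell monic polynomial sequence with cubic decomposition $W_{3n}(x)=P_n(x^3)+xa^1_{n-1}(x^3)+x^2a^2_{n-1}(x^3)$, $W_{3n+1}(x)=b^1_n(x^3)+xQ_n(x^3)+x^2b^2_{n-1}(x^3)$, $W_{3n+2}(x)=c^1_n(x^3)+xc^2_n(x^3)+x^2R_n(x^3)$ (components as in the context). (1) Either the three sequences $\{a^1_n\}_{n\ge0}$, $\{c^1_n\}_{n\ge0}$, $\{b^2_n\}_{n\ge0}$ are all identically the null sequence, or they are all non-null, and in this case there are a non-negative integer $\kappa$ and numerical sequences $\mu_{1,n},\mu_{2,n},\mu_{3,n}$ such that for $n\ge0$ $$b^2_{n+\kappa}(x)=\mu_{1,n}\hat b^2_n(x),\quad a^1_{n+\kappa}(x)=\mu_{2,n}\hat a^1_n(x),\quad c^1_{n+\kappa}(x)=\mu_{3,n}\hat c^1_n(x),$$ where $\{\hat a^1_n\},\{\hat c^1_n\},\{\hat b^2_n\}$ are monic polynomial sequences. (2) Either the three sequences $\{a^2_n\}_{n\ge0}$, $\{c^2_n\}_{n\ge0}$, $\{b^1_n\}_{n\ge0}$ are all identically null, or they are all non-null, and in this case there are a non-negative integer $\tau$ and numerical sequences $\alpha_{1,n},\alpha_{2,n},\alpha_{3,n}$ such that for $n\ge0$ $$a^2_{n+\tau}(x)=\alpha_{1,n}\hat a^2_n(x),\quad c^2_{n+\tau}(x)=\alpha_{2,n}\hat c^2_n(x),\quad b^1_{n+\tau}(x)=\alpha_{3,n}\hat b^1_n(x),$$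 where $\{\hat a^2_n\},\{\hat c^2_n\},\{\hat b^1_n\}$ are monic polynomial sequences. (3) Furthermore, there are two nonzero constants $b^2_\kappa$ and $a^2_\tau$ such that $\mu_{1,n}=\frac{(\kappa+\frac73)_n(\kappa+\frac53)_n}{(\frac43)_n(\frac53)_n}\binom{n+\kappa+1}{n}b^2_\kappa$ for $n\ge0$; $\mu_{2,n}=\frac{(\kappa+\frac73)_{n-1}(\kappa+\frac53)_n}{(\frac43)_n(\frac53)_{n-1}}\binom{n+\kappa+1}{n}b^2_\kappa$ for $n\ge1$; $\mu_{3,n}=\frac{(\kappa+\frac73)_{n-1}(\kappa+\frac53)_n}{(\frac43)_{n-1}(\frac53)_{n-1}}\binom{n+\kappa}{n}\frac{b^2_\kappa}{\kappa+1}$ for $n\ge1$; $\alpha_{1,n}=\frac{(\tau+\frac53)_n(\tau+\frac43)_n}{(\frac43)_n(\frac53)_n}\binom{n+\tau+1}{n}a^2_\tau$ for $n\ge0$; $\alpha_{2,n}=\frac{(\tau+\frac53)_n(\tau+\frac43)_n}{(\frac43)_n(\frac53)_{n-1}}\binom{n+\tau}{n}\frac{a^2_\tau}{\tau+1}$ for $n\ge1$; $\alpha_{3,n}=\frac{(\tau+\frac53)_{n-1}(\tau+\frac43)_n}{(\frac43)_{n-1}(\frac53)_{n-1}}\binom{n+\tau}{n}\frac{a^2_\tau}{\tau+1}$ for $n\ge1$; with $\mu_{2,0}=\frac{2b^2_\kappa}{3(\kappa+\frac43)}$, $\mu_{3,0}=\frac{2b^2_\kappa}{9(\kappa+1)(\kappa+\frac43)}$,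 $\alpha_{2,0}=\frac{2a^2_\tau}{3(\tau+1)}$, $\alpha_{3,0}=\frac{2a^2_\tau}{9(\tau+1)(\tau+\frac23)}$.
   Context: An MPS is a sequence $\{W_n\}_{n\ge0}$ of complex polynomials with $W_n$ monic of degree $n$; it is Appell if $W_{n+1}'=(n+1)W_n$ for $n\ge0$. Cubic decomposition: for any MPS there are unique polynomials with the displayed identities for all $n\ge0$, where $\{P_n\},\{Q_n\},\{R_n\}$ are MPSs and $\deg a^1_{n-1},\deg a^2_{n-1},\deg b^2_{n-1}\le n-1$, $\deg b^1_n,\deg c^1_n,\deg c^2_n\le n$, with $a^1_{-1}=a^2_{-1}=b^2_{-1}=0$. $(a)_n$ denotes the Pochhammer symbol $(a)_n=a(a+1)\cdots(a+n-1)$ for $n\ge1$, $(a)_0=1$. *)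

(* Complex polynomials: stated over an arbitrary
   numClosedFieldType C (covers the complex numbers). *)
From HB Require Import structures.
From mathcomp Require Import all_boot all_order all_algebra.
Set Implicit Arguments. Unset Strict Implicit. Unset Printing Implicit Defensive.
Import Order.TTheory GRing.Theory Num.Theory.
Local Open Scope ring_scope.

Definition MPS (C : numClosedFieldType) (W : nat -> {poly C}) : Prop :=
  forall n, W n \is monic /\ size (W n) = n.+1.

Definition Appell (C : numClosedFieldType) (W : nat -> {poly C}) : Prop :=
  MPS W /\ forall n, (W n.+1)^`() = (n.+1)%:R *: W n.

Definition prevp (C : numClosedFieldType) (s : nat -> {poly C}) (n : nat) : {poly C} :=
  if n is m.+1 then s m else 0.

Definition cubic_decomposition (C : numClosedFieldType)
  (W P Q R a1 a2 b1 b2 c1 c2 : nat -> {poly C}) : Prop :=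
  MPS P /\ MPS Q /\ MPS R /\
      (forall n, (size (a1 n) <= n.+1)%N /\ (size (a2 n) <= n.+1)%N /\ (size (b2 n) <= n.+1)%N) /\
      (forall n, (size (b1 n) <= n.+1)%N /\ (size (c1 n) <= n.+1)%N /\ (size (c2 n) <= n.+1)%N) /\
      (forall n, W (3 * n)%N = P n \Po 'X^3 + 'X * (prevp a1 n \Po 'X^3)
                               + 'X^2 * (prevp a2 n \Po 'X^3)) /\
      (forall n, W (3 * n + 1)%N = b1 n \Po 'X^3 + 'X * (Q n \Po 'X^3)
                               + 'X^2 * (prevp b2 n \Po 'X^3)) /\
      (forall n, W (3 * n + 2)%N = c1 n \Po 'X^3 + 'X * (c2 n \Po 'X^3)
                               + 'X^2 * (R n \Po 'X^3)).

Definition poch (C : numClosedFieldType) (a : C) (n : nat) : C :=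
  \prod_(i < n) (a + i%:R).

From HB Require Import structures.
From mathcomp Require Import all_boot all_order all_algebra.
From mathcomp Require Import ring zify.
From Stdlib Require Import Classical_Prop.
Set Implicit Arguments. Unset Strict Implicit. Unset Printing Implicit Defensive.
Import Order.TTheory GRing.Theory Num.Theory.
Local Open Scope ring_scope.

(* Reading the cubic decomposition coefficientwise, coefficient i of a1_n, c1_n,
   b2_n is a coefficient of W_{3n+3}, W_{3n+2}, W_{3n+4}, and the Appell relation
   (W_{N+1})_{j+1} (j+1) = (N+1) (W_N)_j links these by nonzero rational factors,
   and also links (b2_n)_i to (c1_{n+1})_{i+1}.  So the three sequences vanish at
   the same places, and the zero pattern propagates along diagonals.  Since b2_0
   is constant, if kappa is the first index with b2_kappa <> 0, then b2, a1, c1 at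
   index n + kappa have degree exactly n; their leading coefficients satisfy a
   first order recurrence with rational coefficients whose solution is the
   product of Pochhammer symbols.  The triple a2, c2, b1 is handled identically. *)

Definition cubic_sum (R : nzRingType) (p q r : {poly R}) :=
  p \Po 'X^3 + 'X * (q \Po 'X^3) + 'X^2 * (r \Po 'X^3).

Lemma coef_cubic_sum (R : nzRingType) (p q r : {poly R}) (i : nat) :
  [/\ (cubic_sum p q r)`_(3 * i) = p`_i, (cubic_sum p q r)`_(3 * i + 1) = q`_i
    & (cubic_sum p q r)`_(3 * i + 2) = r`_i].
Proof.
rewrite /cubic_sum !coefD !coefXM !coefXnM !coef_comp_poly_Xn //.
split.
- rewrite dvdn_mulr // mulKn //.
  case: i => [|i] /=; first by rewrite !addr0.
  have -> : (3 %| (3 * i.+1).-1)%N = false by apply/negbTE; lia.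
  have -> : (3 * i.+1 < 2)%N = false by lia.
  have -> : (3 %| (3 * i.+1 - 2))%N = false by apply/negbTE; lia.
  by rewrite !addr0.
- have -> : (3 %| 3 * i + 1)%N = false by apply/negbTE; lia.
  have -> : ((3 * i + 1).-1 = 3 * i)%N by lia.
  rewrite dvdn_mulr // mulKn //.
  case: i => [|i] /=; first by rewrite !addr0 add0r.
  have -> : (3 * i.+1 + 1 < 2)%N = false by lia.
  have -> : (3 %| (3 * i.+1 + 1 - 2))%N = false by apply/negbTE; lia.
  by rewrite !addr0 add0r.
- have -> : (3 %| 3 * i + 2)%N = false by apply/negbTE; lia.
  have -> : (3 %| (3 * i + 2).-1)%N = false by apply/negbTE; lia.
  have -> : (3 * i + 2 < 2)%N = false by lia.
  by rewrite addnK dvdn_mulr // mulKn // !add0r if_same add0r.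
Qed.

Lemma size_coef_last (R : nzSemiRingType) (p : {poly R}) n :
  p`_n != 0 -> (forall i, (n < i)%N -> p`_i = 0) -> size p = n.+1.
Proof.
move=> pn0 p_high; apply/eqP; rewrite eqn_leq; apply/andP; split.
  by apply/leq_sizeP => j /p_high.
by rewrite ltnNge; apply: contra pn0 => /leq_sizeP ->.
Qed.

Lemma size_eq_coef_eq0 (R : nzSemiRingType) (p q : {poly R}) :
  (forall i, (p`_i == 0) = (q`_i == 0)) -> size p = size q.
Proof.
have le_size (r s : {poly R}) : (forall i, (r`_i == 0) = (s`_i == 0)) ->
    (size r <= size s)%N.
  move=> rs; apply/leq_sizeP => j le_sj; apply/eqP; rewrite rs.
  by apply/eqP; move: le_sj; apply/leq_sizeP.
by move=> pq; apply/eqP; rewrite eqn_leq !le_size // => i; rewrite pq.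
Qed.

Lemma diagonal_shift_alternative (R : nzSemiRingType) (u : nat -> {poly R}) :
  (forall n i, ((u n.+1)`_i.+1 == 0) = ((u n)`_i == 0)) -> (size (u 0%N) <= 1)%N ->
  (forall n, u n = 0) \/ exists k, forall n, size (u (n + k)%N) = n.+1.
Proof.
move=> u_shift u0_const.
have shift j n i : ((u (j + n)%N)`_(j + i) == 0) = ((u n)`_i == 0).
  by elim: j => // j IH; rewrite !addSn u_shift.
have [[n un0]|u_zero] := classic (exists n, u n != 0); last first.
  by left=> n; apply/eqP/negPn/negP => un0; apply: u_zero; exists n.
have u_nonzero : exists n, u n != 0 by exists n.
right; have [k uk0 k_min] := ex_minnP u_nonzero; exists k => m.
have uk_high i : (u k)`_i.+1 = 0.
  case: k uk0 k_min => [|k] _ k_min; first by move/leq_sizeP: u0_const; apply.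
  have uk : u k = 0 by case: (eqVneq (u k) 0) => // /k_min; rewrite ltnn.
  by apply/eqP; rewrite u_shift uk coef0.
have uk_const : (u k)`_0 != 0.
  apply: contra uk0 => /eqP uk_0; apply/eqP/polyP => -[|i];
  by rewrite coef0 ?uk_0 ?uk_high.
apply: size_coef_last => [|i lt_mi].
  by have := shift m k 0%N; rewrite addn0 => ->.
rewrite -(subnKC (ltnW lt_mi)); apply/eqP; rewrite shift.
by rewrite -subn_gt0 in lt_mi; case: (i - m)%N lt_mi => // j _; rewrite uk_high.
Qed.

Lemma proportional_eq0 (R : idomainType) (x y a b : R) :
  a != 0 -> b != 0 -> x * a = y * b -> (x == 0) = (y == 0).
Proof.
move=> a0 b0 /(congr1 (fun z => z == 0)).
by rewrite !mulf_eq0 (negbTE a0) (negbTE b0) !orbF.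
Qed.

(* The coefficient relations obtained from the Appell property: d = 1 for
   (u, v, w) = (b2, a1, c1) and d = 0 for (u, v, w) = (a2, c2, b1). *)
Definition cubic_chain (F : numFieldType) (d : nat) (u v w : nat -> {poly F}) :=
  forall n i, [/\ (v n)`_i * (3 * n + d + 3)%:R = (u n)`_i * (3 * i + 2)%:R,
                  (w n)`_i * (3 * n + d + 2)%:R = (v n)`_i * (3 * i + 1)%:R
                & (u n)`_i * (3 * n + d + 4)%:R = (w n.+1)`_i.+1 * (3 * i + 3)%:R].

Lemma cubic_chain_alternative (F : numFieldType) d (u v w : nat -> {poly F}) :
  cubic_chain d u v w -> (size (u 0%N) <= 1)%N ->
  (forall n, [/\ u n = 0, v n = 0 & w n = 0]) \/
  exists k, [/\ forall n, size (u (n + k)%N) = n.+1,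
                forall n, size (v (n + k)%N) = n.+1
              & forall n, size (w (n + k)%N) = n.+1].
Proof.
move=> chain u0_const.
have v_u n i : ((v n)`_i == 0) = ((u n)`_i == 0).
  by have [e _ _] := chain n i; apply: proportional_eq0 e; rewrite pnatr_eq0; lia.
have w_u n i : ((w n)`_i == 0) = ((u n)`_i == 0).
  have [_ e _] := chain n i.
  by rewrite -v_u; apply: proportional_eq0 e; rewrite pnatr_eq0; lia.
have size_v n : size (v n) = size (u n) by apply: size_eq_coef_eq0.
have size_w n : size (w n) = size (u n) by apply: size_eq_coef_eq0.
have u_shift n i : ((u n.+1)`_i.+1 == 0) = ((u n)`_i == 0).
  have [_ _ e] := chain n i.
  by rewrite -w_u; symmetry; apply: proportional_eq0 e; rewrite pnatr_eq0; lia.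
have [u_zero|[k size_u]] := diagonal_shift_alternative u_shift u0_const.
- left=> n; split; rewrite ?u_zero //; apply/eqP;
  by rewrite -size_poly_eq0 ?size_v ?size_w u_zero size_poly0.
- by right; exists k; split=> n; rewrite ?size_v ?size_w.
Qed.

Section ClosedForms.

Variable C : numClosedFieldType.

Lemma poch0 (a : C) : poch a 0 = 1.
Proof. by rewrite /poch big_ord0. Qed.

Lemma pochS (a : C) n : poch a n.+1 = poch a n * (a + n%:R).
Proof. by rewrite /poch big_ord_recr. Qed.

Lemma poch_neq0 (a : C) n : 0 < a -> poch a n != 0.
Proof.
move=> a_gt0; rewrite /poch gt_eqF //; apply: prodr_gt0 => i _.
by rewrite ltr_wpDr ?ler0n.
Qed.

Lemma natr_add_frac_gt0 (k a b : nat) : (0 < a)%N -> (0 < b)%N -> 0 < k%:R + a%:R / b%:R :> C.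
Proof. by move=> a_gt0 b_gt0; rewrite ltr_wpDl ?ler0n // divr_gt0 ?ltr0n. Qed.

Ltac field_neq0 := repeat (apply/andP; split);
  first [ apply: poch_neq0; first [apply: natr_add_frac_gt0 | apply: divr_gt0];
          by rewrite ?ltr0n
        | rewrite ?(natr1, nat1r, esym (natrD _ _ _), esym (natrM _ _ _)) pnatr_eq0; lia ].

Lemma binS_ratio (n k : nat) :
  ('C(n.+1 + k + 1, n.+1))%:R = ('C(n + k + 1, n))%:R * (n + k + 2)%:R / (n.+1)%:R :> C.
Proof.
have := mul_bin_diag (n + k + 2) n.
have -> : (n + k + 2).-1 = (n + k + 1)%N by lia.
have -> : (n.+1 + k + 1 = n + k + 2)%N by lia.
move=> /(congr1 (fun m => m%:R : C)); rewrite !natrM => e.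
by rewrite [X in X / _]mulrC e mulrC mulKf // pnatr_eq0.
Qed.

Lemma bin_down_ratio (n k : nat) :
  ('C(n.+1 + k, n.+1))%:R = ('C(n.+1 + k + 1, n.+1))%:R * (k.+1)%:R / (n + k + 2)%:R :> C.
Proof.
have := mul_bin_down (n + k + 2) n.+1.
have -> : (n + k + 2).-1 = (n.+1 + k)%N by lia.
have -> : (n + k + 2 - n.+1 = k.+1)%N by lia.
have -> : (n.+1 + k + 1 = n + k + 2)%N by lia.
move=> /(congr1 (fun m => m%:R : C)); rewrite !natrM => e.
by rewrite [X in X / _]mulrC -e mulrC mulKf // pnatr_eq0 addn2.
Qed.

Definition scalar_chain (d k : nat) (U V W : nat -> C) :=
  forall n, [/\ V n * (3 * (n + k) + d + 3)%:R = U n * (3 * n + 2)%:R,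
                W n * (3 * (n + k) + d + 2)%:R = V n * (3 * n + 1)%:R
              & U n * (3 * (n + k) + d + 4)%:R = W n.+1 * (3 * n + 3)%:R].

Lemma cubic_chain_diag d k (u v w : nat -> {poly C}) :
  cubic_chain d u v w ->
  scalar_chain d k (fun n => (u (n + k)%N)`_n) (fun n => (v (n + k)%N)`_n)
                   (fun n => (w (n + k)%N)`_n).
Proof. by move=> chain n; exact: chain. Qed.

Lemma scalar_chain_solved d k U V W : scalar_chain d k U V W -> forall n,
  [/\ V n = U n * (3 * n + 2)%:R / (3 * (n + k) + d + 3)%:R,
      W n = U n * ((3 * n + 2) * (3 * n + 1))%:R
                / ((3 * (n + k) + d + 3) * (3 * (n + k) + d + 2))%:R
    & U n.+1 = U n * ((3 * (n + k) + d + 4) * (3 * (n + k) + d + 5) * (3 * (n + k) + d + 6))%:R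
                   / ((3 * n + 3) * (3 * n + 4) * (3 * n + 5))%:R].
Proof.
move=> chain n.
have [eV eW eU] := chain n; have [eV1 eW1 _] := chain n.+1.
have eVn : V n = U n * (3 * n + 2)%:R / (3 * (n + k) + d + 3)%:R.
  by rewrite -eV mulfK // pnatr_eq0; lia.
have eWn : W n = V n * (3 * n + 1)%:R / (3 * (n + k) + d + 2)%:R.
  by rewrite -eW mulfK // pnatr_eq0; lia.
have eWn1 : W n.+1 = U n * (3 * (n + k) + d + 4)%:R / (3 * n + 3)%:R.
  by rewrite eU mulfK // pnatr_eq0; lia.
have eVn1 : V n.+1 = W n.+1 * (3 * (n.+1 + k) + d + 2)%:R / (3 * n.+1 + 1)%:R.
  by rewrite eW1 mulfK // pnatr_eq0; lia.
have eUn1 : U n.+1 = V n.+1 * (3 * (n.+1 + k) + d + 3)%:R / (3 * n.+1 + 2)%:R.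
  by rewrite eV1 mulfK // pnatr_eq0; lia.
split=> //.
  by rewrite eWn eVn; field; field_neq0.
by rewrite eUn1 eVn1 eWn1; field; field_neq0.
Qed.

Definition kappa_closed_forms (k : nat) (beta : C) (mu1 mu2 mu3 : nat -> C) :=
  (forall n, mu1 n = poch (k%:R + 7/3) n * poch (k%:R + 5/3) n
                     / (poch (4/3) n * poch (5/3) n)
                     * ('C(n + k + 1, n))%:R * beta) /\
  (forall m, mu2 m.+1 = poch (k%:R + 7/3) m * poch (k%:R + 5/3) m.+1
                     / (poch (4/3) m.+1 * poch (5/3) m)
                     * ('C(m.+1 + k + 1, m.+1))%:R * beta) /\
  (forall m, mu3 m.+1 = poch (k%:R + 7/3) m * poch (k%:R + 5/3) m.+1
                     / (poch (4/3) m * poch (5/3) m)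
                     * ('C(m.+1 + k, m.+1))%:R * (beta / (k%:R + 1))) /\
  mu2 0%N = 2 * beta / (3 * (k%:R + 4/3)) /\
  mu3 0%N = 2 * beta / (9 * (k%:R + 1) * (k%:R + 4/3)).

Lemma scalar_chain1_closed_forms k U V W :
  scalar_chain 1 k U V W -> kappa_closed_forms k (U 0%N) U V W.
Proof.
move=> /scalar_chain_solved solved.
have eU n : U n = poch (k%:R + 7/3) n * poch (k%:R + 5/3) n
                  / (poch (4/3) n * poch (5/3) n) * ('C(n + k + 1, n))%:R * U 0%N.
  elim: n => [|n IH]; first by rewrite !poch0 bin0; field.
  have [_ _ ->] := solved n; rewrite IH !pochS binS_ratio; field; field_neq0.
split=> //.
split=> [m|]; first by have [-> _ _] := solved m.+1; rewrite eU !pochS; field; field_neq0.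
split=> [m|].
  by have [_ -> _] := solved m.+1; rewrite eU bin_down_ratio !pochS; field; field_neq0.
split; first by have [-> _ _] := solved 0%N; rewrite eU !poch0 bin0; field; field_neq0.
by have [_ -> _] := solved 0%N; rewrite eU !poch0 bin0; field; field_neq0.
Qed.

Definition tau_closed_forms (t : nat) (gamma : C) (al1 al2 al3 : nat -> C) :=
  (forall n, al1 n = poch (t%:R + 5/3) n * poch (t%:R + 4/3) n
                     / (poch (4/3) n * poch (5/3) n)
                     * ('C(n + t + 1, n))%:R * gamma) /\
  (forall m, al2 m.+1 = poch (t%:R + 5/3) m.+1 * poch (t%:R + 4/3) m.+1
                     / (poch (4/3) m.+1 * poch (5/3) m)
                     * ('C(m.+1 + t, m.+1))%:R * (gamma / (t%:R + 1))) /\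
  (forall m, al3 m.+1 = poch (t%:R + 5/3) m * poch (t%:R + 4/3) m.+1
                     / (poch (4/3) m * poch (5/3) m)
                     * ('C(m.+1 + t, m.+1))%:R * (gamma / (t%:R + 1))) /\
  al2 0%N = 2 * gamma / (3 * (t%:R + 1)) /\
  al3 0%N = 2 * gamma / (9 * (t%:R + 1) * (t%:R + 2/3)).

Lemma scalar_chain0_closed_forms t U V W :
  scalar_chain 0 t U V W -> tau_closed_forms t (U 0%N) U V W.
Proof.
move=> /scalar_chain_solved solved.
have eU n : U n = poch (t%:R + 5/3) n * poch (t%:R + 4/3) n
                  / (poch (4/3) n * poch (5/3) n) * ('C(n + t + 1, n))%:R * U 0%N.
  elim: n => [|n IH]; first by rewrite !poch0 bin0; field.
  have [_ _ ->] := solved n; rewrite IH !pochS binS_ratio; field; field_neq0.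
split=> //.
split=> [m|].
  by have [-> _ _] := solved m.+1; rewrite eU bin_down_ratio !pochS; field; field_neq0.
split=> [m|].
  by have [_ -> _] := solved m.+1; rewrite eU bin_down_ratio !pochS; field; field_neq0.
split; first by have [-> _ _] := solved 0%N; rewrite eU !poch0 bin0; field; field_neq0.
by have [_ -> _] := solved 0%N; rewrite eU !poch0 bin0; field; field_neq0.
Qed.

End ClosedForms.

Lemma monic_normalization (C : numClosedFieldType) (p : nat -> {poly C}) :
  (forall n, size (p n) = n.+1) ->
  MPS (fun n => ((p n)`_n)^-1 *: p n) /\ forall n, p n = (p n)`_n *: (((p n)`_n)^-1 *: p n).
Proof.
move=> size_p; have lead_p n : (p n)`_n = lead_coef (p n) by rewrite lead_coefE size_p.
have pn0 n : (p n)`_n != 0 by rewrite lead_p lead_coef_eq0 -size_poly_eq0 size_p.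
split=> [n|n]; last by rewrite scalerA divff ?scale1r.
rewrite monicE lead_coefZ -lead_p mulVf //; split=> //.
by rewrite size_scale ?invr_eq0.
Qed.

Lemma size1_polyC_neq0 (C : numClosedFieldType) (p : {poly C}) :
  size p = 1%N -> p`_0 != 0 /\ p = (p`_0)%:P.
Proof.
move=> size_p; split; last by apply: size1_polyC; rewrite size_p.
have := lead_coefE p; rewrite size_p /= => <-.
by rewrite lead_coef_eq0 -size_poly_eq0 size_p.
Qed.

Lemma appell_coef (C : numClosedFieldType) (W : nat -> {poly C}) N M k l a b :
  Appell W -> M = N.+1 -> l = k.+1 -> a = l -> b = M ->
  (W N)`_k * b%:R = (W M)`_l * a%:R.
Proof.
move=> [_ W_deriv] -> -> -> ->.
have := congr1 (fun p : {poly C} => p`_k) (W_deriv N).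
by rewrite /= coef_deriv coefZ !mulr_natr => ->; rewrite mulr_natl.
Qed.

Section CubicDecomposition.

Variables (C : numClosedFieldType) (W P Q R a1 a2 b1 b2 c1 c2 : nat -> {poly C}).
Hypothesis W_dec : cubic_decomposition W P Q R a1 a2 b1 b2 c1 c2.

Lemma coef_W3_a n i :
  (W (3 * n + 3))`_(3 * i + 1) = (a1 n)`_i /\ (W (3 * n + 3))`_(3 * i + 2) = (a2 n)`_i.
Proof.
have [_ [_ [_ [_ [_ [W0 _]]]]]] := W_dec.
have -> : (3 * n + 3 = 3 * n.+1)%N by lia.
by rewrite W0; have [_ -> ->] := coef_cubic_sum (P n.+1) (a1 n) (a2 n) i.
Qed.

Lemma coef_W3_b n i :
  (W (3 * n + 1))`_(3 * i) = (b1 n)`_i /\ (W (3 * n + 4))`_(3 * i + 2) = (b2 n)`_i.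
Proof.
have [_ [_ [_ [_ [_ [_ [W1 _]]]]]]] := W_dec.
have -> : (3 * n + 4 = 3 * n.+1 + 1)%N by lia.
rewrite !W1; have [-> _ _] := coef_cubic_sum (b1 n) (Q n) (prevp b2 n) i.
by have [_ _ ->] := coef_cubic_sum (b1 n.+1) (Q n.+1) (b2 n) i.
Qed.

Lemma coef_W3_c n i :
  (W (3 * n + 2))`_(3 * i) = (c1 n)`_i /\ (W (3 * n + 2))`_(3 * i + 1) = (c2 n)`_i.
Proof.
have [_ [_ [_ [_ [_ [_ [_ W2]]]]]]] := W_dec.
by rewrite W2; have [-> -> _] := coef_cubic_sum (c1 n) (c2 n) (R n) i.
Qed.

Lemma size_b2_a2_0 : (size (b2 0%N) <= 1)%N /\ (size (a2 0%N) <= 1)%N.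
Proof. by have [_ [_ [_ [/(_ 0%N) [_ [? ?]] _]]]] := W_dec. Qed.

Hypothesis W_appell : Appell W.

Lemma kappa_chain : cubic_chain 1 b2 a1 c1.
Proof.
move=> n i; split.
- rewrite -(coef_W3_a n i).1 -(coef_W3_b n i).2; apply: (appell_coef W_appell); lia.
- rewrite -(coef_W3_c n i).1 -(coef_W3_a n i).1; apply: (appell_coef W_appell); lia.
- rewrite -(coef_W3_b n i).2 -(coef_W3_c n.+1 i.+1).1; apply: (appell_coef W_appell); lia.
Qed.

Lemma tau_chain : cubic_chain 0 a2 c2 b1.
Proof.
move=> n i; split.
- rewrite -(coef_W3_c n i).2 -(coef_W3_a n i).2; apply: (appell_coef W_appell); lia.
- rewrite -(coef_W3_b n i).1 -(coef_W3_c n i).2; apply: (appell_coef W_appell); lia.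
- rewrite -(coef_W3_a n i).2 -(coef_W3_b n.+1 i.+1).1; apply: (appell_coef W_appell); lia.
Qed.

End CubicDecomposition.

Theorem theorem2 (C : numClosedFieldType)
  (W P Q R a1 a2 b1 b2 c1 c2 : nat -> {poly C}) :
  Appell W ->
  cubic_decomposition W P Q R a1 a2 b1 b2 c1 c2 ->
  ((forall n, a1 n = 0 /\ c1 n = 0 /\ b2 n = 0) \/
   ((exists n, a1 n != 0) /\ (exists n, c1 n != 0) /\ (exists n, b2 n != 0) /\
    exists (k : nat) (mu1 mu2 mu3 : nat -> C) (ha1 hc1 hb2 : nat -> {poly C}),
      [/\ MPS ha1, MPS hc1, MPS hb2,
          (forall n, b2 (n + k)%N = mu1 n *: hb2 n
                  /\ a1 (n + k)%N = mu2 n *: ha1 n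
                  /\ c1 (n + k)%N = mu3 n *: hc1 n) &
      exists beta : C, beta != 0 /\ b2 k = beta%:P /\
        (forall n, mu1 n = poch (k%:R + 7/3) n * poch (k%:R + 5/3) n
                           / (poch (4/3) n * poch (5/3) n)
                           * ('C(n + k + 1, n))%:R * beta) /\
        (forall m, mu2 m.+1 = poch (k%:R + 7/3) m * poch (k%:R + 5/3) m.+1
                           / (poch (4/3) m.+1 * poch (5/3) m)
                           * ('C(m.+1 + k + 1, m.+1))%:R * beta) /\
        (forall m, mu3 m.+1 = poch (k%:R + 7/3) m * poch (k%:R + 5/3) m.+1
                           / (poch (4/3) m * poch (5/3) m)
                           * ('C(m.+1 + k, m.+1))%:R * (beta / (k%:R + 1))) /\
        mu2 0%N = 2 * beta / (3 * (k%:R + 4/3)) /\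
        mu3 0%N = 2 * beta / (9 * (k%:R + 1) * (k%:R + 4/3))])) /\
  ((forall n, a2 n = 0 /\ c2 n = 0 /\ b1 n = 0) \/
   ((exists n, a2 n != 0) /\ (exists n, c2 n != 0) /\ (exists n, b1 n != 0) /\
    exists (t : nat) (al1 al2 al3 : nat -> C) (ha2 hc2 hb1 : nat -> {poly C}),
      [/\ MPS ha2, MPS hc2, MPS hb1,
          (forall n, a2 (n + t)%N = al1 n *: ha2 n
                  /\ c2 (n + t)%N = al2 n *: hc2 n
                  /\ b1 (n + t)%N = al3 n *: hb1 n) &
      exists gamma : C, gamma != 0 /\ a2 t = gamma%:P /\
        (forall n, al1 n = poch (t%:R + 5/3) n * poch (t%:R + 4/3) n
                           / (poch (4/3) n * poch (5/3) n)
                           * ('C(n + t + 1, n))%:R * gamma) /\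
        (forall m, al2 m.+1 = poch (t%:R + 5/3) m.+1 * poch (t%:R + 4/3) m.+1
                           / (poch (4/3) m.+1 * poch (5/3) m)
                           * ('C(m.+1 + t, m.+1))%:R * (gamma / (t%:R + 1))) /\
        (forall m, al3 m.+1 = poch (t%:R + 5/3) m * poch (t%:R + 4/3) m.+1
                           / (poch (4/3) m * poch (5/3) m)
                           * ('C(m.+1 + t, m.+1))%:R * (gamma / (t%:R + 1))) /\
        al2 0%N = 2 * gamma / (3 * (t%:R + 1)) /\
        al3 0%N = 2 * gamma / (9 * (t%:R + 1) * (t%:R + 2/3))])).
Proof.
move=> W_appell W_dec; have [b2_0 a2_0] := size_b2_a2_0 W_dec.
have kappa := kappa_chain W_dec W_appell; have tau := tau_chain W_dec W_appell.
split.
- have [zero|[k [size_b2 size_a1 size_c1]]] := cubic_chain_alternative kappa b2_0.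
    by left=> n; have [-> -> ->] := zero n.
  have [hb2 eb2] := monic_normalization size_b2.
  have [ha1 ea1] := monic_normalization size_a1.
  have [hc1 ec1] := monic_normalization size_c1.
  have [b2k0 b2k] := size1_polyC_neq0 (size_b2 0%N).
  right; split; [|split; [|split]];
    try by exists (0 + k)%N; rewrite -size_poly_gt0 ?size_a1 ?size_b2 ?size_c1.
  do 7!eexists; split; [exact: ha1 | exact: hc1 | exact: hb2 | |].
  by move=> n; split; [|split]; [apply: eb2 | apply: ea1 | apply: ec1].
  exists (b2 k)`_0; do 2!split=> //.
  exact: scalar_chain1_closed_forms (cubic_chain_diag k kappa).
- have [zero|[t [size_a2 size_c2 size_b1]]] := cubic_chain_alternative tau a2_0.
    by left=> n; have [-> -> ->] := zero n.
  have [ha2 ea2] := monic_normalization size_a2.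
  have [hc2 ec2] := monic_normalization size_c2.
  have [hb1 eb1] := monic_normalization size_b1.
  have [a2t0 a2t] := size1_polyC_neq0 (size_a2 0%N).
  right; split; [|split; [|split]];
    try by exists (0 + t)%N; rewrite -size_poly_gt0 ?size_a2 ?size_c2 ?size_b1.
  do 7!eexists; split; [exact: ha2 | exact: hc2 | exact: hb1 | |].
  by move=> n; split; [|split]; [apply: ea2 | apply: ec2 | apply: eb1].
  exists (a2 t)`_0; do 2!split=> //.
  exact: scalar_chain0_closed_forms (cubic_chain_diag t tau).
Qed.
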